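(* In the directed variant of the greedy routing network creation game on any finite point set $\mathcal P$ in any metric space, a strategy profile is a pure Nash equilibrium if and only if it is a social optimum.
   Context: Let $\mathcal P$ be a finite set of $n\ge2$ points (agents) in a metric space with metric $d$. In the directed variant each agent $u$ chooses a strategy $S_u\subseteq\{(u,v):v\in\mathcal P\setminus\{u\}\}$ of directed edges, which it owns. A profile $\mathbf s=(S_u)_u$ induces the directed network $G(\mathbf s)=(\mathcal P,\bigcup_u S_u)$. A greedy routing path from $u$ to $w$ is a directed path $(x_1=u,\dots,x_j=w)$ in $G(\mathbf s)$ with $d(x_i,w)>d(x_{i+1},w)$ for all $i$; $u$ is greedy connected if it has a greedy routing path to every other agent. The cost of $u$ is $c_u(\mathbf s)=|S_u|$ if $u$ is greedy connected in $G(\mathbf s)$ and $\infty$ otherwise; the social cost is $c(\mathbf s)=\sum_u c_u(\mathbf s)$. A pure Nash equilibrium (NE) is a profile in which no agent can strictly decrease its cost by unilaterally changing its strategy; a social optimum (SO) is a profile minimizing the social cost. *)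

From mathcomp Require Import all_boot all_order all_algebra.
From mathcomp Require Import boolp.
Set Implicit Arguments. Unset Strict Implicit. Unset Printing Implicit Defensive.
Import Order.TTheory GRing.Theory Num.Theory.
Local Open Scope ring_scope.

(* The finite point set P is the finite type T; d is the metric restricted to P. *)
Definition is_metric (R : realFieldType) (T : finType) (d : T -> T -> R) : Prop :=
  [/\ forall x y, 0 <= d x y,
      forall x y, d x y = 0 <-> x = y,
      forall x y, d x y = d y x &
      forall x y z, d x z <= d x y + d y z].

(* A strategy profile: agent u owns the directed edges (u,v) for v in s u. *)
Definition profile (T : finType) := T -> {set T}.

Definition valid_strategy (T : finType) (u : T) (S : {set T}) : bool := u \notin S.
Definition valid_profile (T : finType) (s : profile T) : Prop :=
  forall u, valid_strategy u (s u).

Definition edge (T : finType) (s : profile T) (x y : T) : bool := y \in s x.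

Definition greedy_path (R : realFieldType) (T : finType) (d : T -> T -> R)
  (s : profile T) (u w : T) (p : seq T) : bool :=
  path (fun x y => edge s x y && (d y w < d x w)) u p && (last u p == w).

Definition greedy_connected (R : realFieldType) (T : finType) (d : T -> T -> R)
  (s : profile T) (u : T) : Prop :=
  forall w, w != u -> exists p, greedy_path d s u w p.

(* Costs take values in nat extended with infinity, encoded as option nat
   (None = infinity). *)
Definition ole (a b : option nat) : bool :=
  match a, b with
  | _, None => true
  | None, Some _ => false
  | Some x, Some y => (x <= y)%N
  end.

Definition olt (a b : option nat) : bool := ~~ ole b a.

Definition agent_cost (R : realFieldType) (T : finType) (d : T -> T -> R)
  (s : profile T) (u : T) : option nat :=
  if `[< greedy_connected d s u >] then Some #|s u| else None.

Definition social_cost (R : realFieldType) (T : finType) (d : T -> T -> R)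
  (s : profile T) : option nat :=
  if `[< forall u, greedy_connected d s u >] then Some (\sum_u #|s u|)%N else None.

Definition deviate (T : finType) (s : profile T) (u : T) (S : {set T}) : profile T :=
  fun x => if x == u then S else s x.

Definition is_NE (R : realFieldType) (T : finType) (d : T -> T -> R) (s : profile T) : Prop :=
  forall u (S : {set T}), valid_strategy u S ->
    ~~ olt (agent_cost d (deviate s u S) u) (agent_cost d s u).

Definition is_SO (R : realFieldType) (T : finType) (d : T -> T -> R) (s : profile T) : Prop :=
  forall s' : profile T, valid_profile s' -> ole (social_cost d s) (social_cost d s').

From mathcomp Require Import all_boot all_order all_algebra.
From mathcomp Require Import boolp.
Set Implicit Arguments. Unset Strict Implicit. Unset Printing Implicit Defensive.
Import Order.TTheory GRing.Theory Num.Theory.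
Local Open Scope ring_scope.

(* Whether u is greedy connected depends only on its own strategy S_u: it is
   so iff every target w has an out-neighbour in S_u strictly closer to w
   (the first hop of a greedy path is one; conversely, greedy paths are built
   by descending on the distance to w).  Since the complete strategy always
   has this property, equilibria and optima have finite cost, and the social
   cost is then a sum of terms |S_u| each constrained only by u's own choice:
   minimizing the sum is the same as every agent minimizing its own term. *)

Section GreedyRouting.

Variables (R : realFieldType) (T : finType) (d : T -> T -> R).

Definition greedy_strategy (u : T) (S : {set T}) : Prop :=
  forall w, w != u -> exists2 v, v \in S & d v w < d u w.

Lemma greedy_connected_strategy (s : profile T) u :
  greedy_connected d s u -> greedy_strategy u (s u).
Proof.
move=> conn_u w wu; have [[|v p] /andP[/= p_path /eqP p_last]] := conn_u w wu.
  by rewrite p_last eqxx in wu.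
by case/andP: p_path => /andP[v_in_su dv_lt] _; exists v.
Qed.

Lemma greedy_strategies_connected (s : profile T) :
  (forall x, greedy_strategy x (s x)) -> forall u, greedy_connected d s u.
Proof.
move=> greedy_s u w _; pose closer x := [set y | d y w < d x w].
have [n] := ubnP #|closer u|; elim: n u => [//|n IHn] u card_u.
have [->|uw] := eqVneq u w; first by exists [::]; rewrite /greedy_path /= eqxx.
move: uw; rewrite eq_sym => /(greedy_s u w) [v v_in_su dv_lt].
have closer_v : closer v \proper closer u.
  apply/properP; split; last by exists v; rewrite !inE // ltxx.
  by apply/subsetP=> y; rewrite !inE => /lt_trans; apply.
have [p /andP[p_path p_last]] : exists p, greedy_path d s v w p.
  by apply: IHn; rewrite -ltnS (leq_trans _ card_u) // ltnS proper_card.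
by exists (v :: p); rewrite /greedy_path /= /edge v_in_su dv_lt p_path.
Qed.

Lemma deviate_connected (s : profile T) u S :
  (forall x, greedy_connected d s x) -> greedy_strategy u S ->
  forall x, greedy_connected d (deviate s u S) x.
Proof.
move=> conn_s greedy_S; apply: greedy_strategies_connected => x.
by rewrite /deviate; case: eqP => [->|_] //; apply: greedy_connected_strategy.
Qed.

Lemma complete_strategy_connected (s : profile T) u :
  is_metric d -> s u = ~: [set u] -> greedy_connected d s u.
Proof.
case=> d_ge0 d_eq0 _ _ su w wu; exists [:: w].
have d_ww : d w w = 0 by apply/d_eq0.
have d_uw : d u w != 0 by apply: contra wu => /eqP/d_eq0 ->.
by rewrite /greedy_path /= /edge su !inE wu d_ww lt_def d_uw d_ge0 eqxx.
Qed.

Lemma agent_costE (s : profile T) u :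
  greedy_connected d s u -> agent_cost d s u = Some #|s u|.
Proof. by move=> conn_u; rewrite /agent_cost asboolT. Qed.

Lemma social_costE (s : profile T) :
  (forall u, greedy_connected d s u) -> social_cost d s = Some (\sum_u #|s u|)%N.
Proof. by move=> conn_s; rewrite /social_cost asboolT. Qed.

Lemma leq_sum_card_deviate (s : profile T) u S :
  (\sum_x #|s x| <= \sum_x #|deviate s u S x|)%N = (#|s u| <= #|S|)%N.
Proof.
rewrite (bigD1 u) // [X in (_ <= X)%N](bigD1 u) //= {1}/deviate eqxx.
rewrite [X in (_ <= _ + X)%N](eq_bigr (fun x => #|s x|)) ?leq_add2r //.
by move=> x /negPf xu; rewrite /deviate xu.
Qed.

Hypothesis metric_d : is_metric d.

Lemma NE_connected (s : profile T) : is_NE d s -> forall u, greedy_connected d s u.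
Proof.
move=> NE_s u; apply: contrapT => not_conn.
have := NE_s u (~: [set u]); rewrite /valid_strategy !inE eqxx => /(_ isT).
rewrite /olt /agent_cost (asboolF not_conn) asboolT //.
by apply: complete_strategy_connected; rewrite // /deviate eqxx.
Qed.

Lemma SO_connected (s : profile T) : is_SO d s -> forall u, greedy_connected d s u.
Proof.
pose complete : profile T := fun x => ~: [set x].
have valid_complete : valid_profile complete.
  by move=> x; rewrite /valid_strategy !inE eqxx.
have conn_complete : forall u, greedy_connected d complete u.
  by move=> u; apply: complete_strategy_connected.
move=> SO_s; have := SO_s complete valid_complete.
by rewrite (social_costE conn_complete) /social_cost; case: asboolP.
Qed.

Lemma NE_SO (s : profile T) : is_NE d s -> is_SO d s.
Proof.
move=> NE_s s' valid_s'; have conn_s := NE_connected NE_s.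
rewrite (social_costE conn_s) /social_cost; case: asboolP => //= conn_s'.
apply: leq_sum => x _.
have conn_dev := deviate_connected conn_s (greedy_connected_strategy (conn_s' x)).
have := NE_s x (s' x) (valid_s' x).
by rewrite /olt !agent_costE // negbK /deviate eqxx.
Qed.

Lemma SO_NE (s : profile T) : valid_profile s -> is_SO d s -> is_NE d s.
Proof.
move=> valid_s SO_s u S valid_S; have conn_s := SO_connected SO_s.
rewrite /olt agent_costE // negbK /agent_cost; case: asboolP => //= conn_dev_u.
have greedy_S : greedy_strategy u S.
  by have := greedy_connected_strategy conn_dev_u; rewrite /deviate eqxx.
have valid_dev : valid_profile (deviate s u S).
  by move=> x; rewrite /deviate; case: eqP => [->|_] //; apply: valid_s.
have := SO_s _ valid_dev.
rewrite (social_costE conn_s) social_costE; last exact: deviate_connected.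
by rewrite /= leq_sum_card_deviate /deviate eqxx.
Qed.

End GreedyRouting.

Theorem mainTheorem5 (R : realFieldType) (T : finType) (d : T -> T -> R) :
  (1 < #|T|)%N -> is_metric d ->
  forall s : profile T, valid_profile s -> (is_NE d s <-> is_SO d s).
Proof.
by move=> _ metric_d s valid_s; split; [exact: NE_SO | exact: SO_NE].
Qed.
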